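(* There exists a locally finite poset $Q$ with a minimum element such that: (a) $Q$ has the Möbius uncertainty property: whenever $f,g:Q\to\mathbb{C}$ are functions, neither identically zero, with $g(z)=\sum_{x\leqslant z} f(x)$ for all $z\in Q$, at least one of $\{x: f(x)\neq0\}$ and $\{x: g(x)\neq 0\}$ is infinite; and (b) $Q$ does not have property $\mathcal{H}_3$: there is a three-element subset $S\subset Q$ such that for every $z\in S$ there are only finitely many $x\in Q$ with $x\geqslant z$ and $x\not\geqslant y$ for all $y\in S\setminus\{z\}$. Consequently, the Möbius uncertainty property does not imply property $\mathcal{H}_k$ for every $k\in\mathbb{N}$.
   Context: A poset is locally finite if every interval $\{z: x\leqslant z\leqslant y\}$ is finite. For $k\in\mathbb{N}$, a poset $P$ has property $\mathcal{H}_k$ if for every subset $S\subset P$ with $|S|=k$ there exists $z\in S$ such that infinitely many $x\in P$ satisfy $x\geqslant z$ and $x\not\geqslant y$ for all $y\in S\setminus\{z\}$. *)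

From mathcomp Require Import all_boot all_order all_algebra.
From mathcomp Require Import boolp classical_sets cardinality fsbigop reals Rstruct.
From mathcomp.real_closed Require Import complex.
Set Implicit Arguments. Unset Strict Implicit. Unset Printing Implicit Defensive.
Import Order.TTheory GRing.Theory Num.Theory.
Local Open Scope classical_set_scope.
Local Open Scope ring_scope.

Definition CC : numClosedFieldType := (Rdefinitions.R)[i].

Definition locally_finite (d : Order.disp_t) (Q : porderType d) : Prop :=
  forall x y : Q, finite_set [set z : Q | (x <= z)%O /\ (z <= y)%O].

Definition has_minimum (d : Order.disp_t) (Q : porderType d) : Prop :=
  exists m : Q, forall x : Q, (m <= x)%O.

Definition mobius_uncertainty (d : Order.disp_t) (Q : porderType d) : Prop :=
  forall f g : Q -> CC,
    (exists x, f x != 0) -> (exists x, g x != 0) ->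
    (forall z : Q, g z = \sum_(x \in [set x : Q | (x <= z)%O]) f x) ->
    ~ finite_set [set x : Q | f x != 0] \/ ~ finite_set [set x : Q | g x != 0].

Definition property_H (d : Order.disp_t) (Q : porderType d) (k : nat) : Prop :=
  forall S : seq Q, uniq S -> size S = k ->
    exists2 z : Q, z \in S &
      ~ finite_set [set x : Q | (z <= x)%O /\
                     (forall y : Q, y \in S -> y != z -> ~ (y <= x)%O)].

(* Q consists of the pairs (A, w) of a subset A of {0,1,2} and a word w over nat,
   where a singleton A carries only the empty word, a larger A only nonempty
   words and the empty A any word; it is ordered by inclusion on A and by the
   prefix order on w.

   H_3 fails for the three atoms ({j}, []): an element above ({j}, []) and above
   no other atom has shape {j}, hence is ({j}, []) itself.

   For the uncertainty property let g = zeta f with f and g finitely supported,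
   and pick a label N occurring in no word of either support. Appending N to the
   word of a non-atom x gives an x' whose down-set exceeds that of x only by
   elements where f vanishes, so g x = g x' = 0; in particular the minimum
   (empty set, []) has f = g = 0. The down-set of ({j, k}, [N]) meets the support
   of f at most in the atoms of j and k, so f vanishes on the sum of any two
   atoms, hence on each atom, and then so does g: g is identically zero. *)

From HB Require Import structures.
From mathcomp Require Import boolp classical_sets cardinality fsbigop reals Rstruct.
From mathcomp.real_closed Require Import complex.
(* Imported after classical_sets so that the finset names [set0], [subset_trans],
   [eqEsubset], ... shadow their classical_sets homonyms. *)
From mathcomp Require Import all_boot all_order all_algebra.
Set Implicit Arguments. Unset Strict Implicit. Unset Printing Implicit Defensive.
Import Order.TTheory GRing.Theory Num.Theory.

Lemma prefix_anti (T : eqType) : antisymmetric (@prefix T).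
Proof.
move=> s t /andP[/prefixP[s' ->] /size_prefix].
rewrite size_cat -[X in (_ <= X)%N]addn0 leq_add2l leqn0 size_eq0.
by move=> /eqP->; rewrite cats0.
Qed.

Lemma prefix_rconsE (T : eqType) (s t : seq T) (a : T) :
  prefix s (rcons t a) = (s == rcons t a) || prefix s t.
Proof.
apply/idP/idP => [|/orP[/eqP->|st]]; last 2 first.
- exact: prefix_refl.
- exact: prefix_trans st (prefix_rcons t a).
elim: t s => [|b t IHt] [|c s] //=.
  by case: s => [|? ?]; rewrite ?andbT ?andbF // => /eqP->; rewrite eqxx.
by rewrite eqseq_cons => /andP[-> /IHt].
Qed.

Definition admissible (p : {set 'I_3} * seq nat) : bool :=
  if #|p.1| == 1%N then p.2 == [::] else (#|p.1| != 0%N) ==> (p.2 != [::]).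

Definition Q := {p : {set 'I_3} * seq nat | admissible p}.
HB.instance Definition _ := [Choice of Q by <:].

Definition shape (x : Q) : {set 'I_3} := (val x).1.
Definition word (x : Q) : seq nat := (val x).2.

Definition le_Q (x y : Q) : bool :=
  (shape x \subset shape y) && prefix (word x) (word y).

Lemma le_Q_refl : reflexive le_Q.
Proof. by move=> x; rewrite /le_Q subxx prefix_refl. Qed.

Lemma le_Q_anti : antisymmetric le_Q.
Proof.
move=> x y /andP[/andP[xy xy'] /andP[yx yx']]; apply: val_inj.
rewrite [val x]surjective_pairing [val y]surjective_pairing.
congr pair; last by apply: prefix_anti; rewrite xy' yx'.
by apply/eqP; rewrite eqEsubset xy.
Qed.

Lemma le_Q_trans : transitive le_Q.
Proof.
move=> y x z /andP[xy xy'] /andP[yz yz'].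
by rewrite /le_Q (subset_trans xy yz) (prefix_trans xy' yz').
Qed.

Fact Q_display : Order.disp_t. Proof. exact: Order.Disp tt tt. Qed.
HB.instance Definition _ :=
  Order.Le_isPOrder.Build Q_display Q le_Q_refl le_Q_anti le_Q_trans.

Local Open Scope order_scope.

Lemma leQE (x y : Q) : (x <= y) = (shape x \subset shape y) && prefix (word x) (word y).
Proof. by []. Qed.

Lemma admissible_bot : admissible (set0, [::]).
Proof. by rewrite /admissible /= cards0. Qed.

Lemma admissible_atom (j : 'I_3) : admissible ([set j], [::]).
Proof. by rewrite /admissible /= cards1. Qed.

Definition bot : Q := exist admissible _ admissible_bot.
Definition atom (j : 'I_3) : Q := exist admissible _ (admissible_atom j).

Lemma le_botx (x : Q) : bot <= x.
Proof. by rewrite leQE sub0set prefix0s. Qed.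

Lemma le_atom (j : 'I_3) (x : Q) : (atom j <= x) = (j \in shape x).
Proof. by rewrite leQE sub1set prefix0s andbT. Qed.

Lemma atom_inj : injective atom.
Proof. by move=> j k /(congr1 shape)/set1_inj. Qed.

Lemma bot_neq_atom (j : 'I_3) : bot != atom j.
Proof. by apply/eqP => /(congr1 (fun x => #|shape x|)); rewrite /= cards0 cards1. Qed.

Lemma shape1_atom (x : Q) (j : 'I_3) : shape x = [set j] -> x = atom j.
Proof.
case: x => [[A s] adm]; rewrite /shape /= => eA; apply: val_inj => /=; congr pair => //.
by move: adm; rewrite /admissible /= eA cards1 => /eqP.
Qed.

Lemma word_nil (x : Q) : word x = [::] -> x = bot \/ exists j, x = atom j.
Proof.
move=> x0; have := valP x; rewrite /admissible -/(shape x) -/(word x) x0.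
have [[j xj] _ | _ /implyP x0'] := altP (@cards1P _ (shape x)).
  by right; exists j; exact: shape1_atom.
left; apply: val_inj; rewrite [val x]surjective_pairing -/(shape x) -/(word x) x0.
by congr pair; apply/cards0_eq/eqP/negPn/(contraNN x0').
Qed.

Local Open Scope classical_set_scope.

Lemma finite_prefix (T : eqType) (t : seq T) : finite_set [set s | prefix s t].
Proof.
apply: (sub_finite_set _ (finite_image (take^~ t) (finite_II (size t).+1))).
move=> s /= st; exists (size s); first by rewrite /= ltnS size_prefix.
by apply/eqP; rewrite -prefixE.
Qed.

Lemma Q_locally_finite : locally_finite Q.
Proof.
move=> x y; pose Y := [set: {set 'I_3}] `*` [set s | prefix s (word y)].
apply: (sub_finite_set (B := val @^-1` Y)); first by move=> z [_ /andP[_ ?]].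
apply: finite_preimage; first by move=> ? ? _ _; exact: val_inj.
exact: finite_setX finite_finset (finite_prefix _).
Qed.

Lemma Q_has_minimum : has_minimum Q.
Proof. by exists bot; exact: le_botx. Qed.

Lemma Q_not_H3 : ~ property_H Q 3.
Proof.
pose S := [seq atom j | j <- enum 'I_3].
have S_uniq : uniq S by rewrite map_inj_uniq ?enum_uniq //; exact: atom_inj.
have S_size : size S = 3 by rewrite size_map size_enum_ord.
move=> /(_ S S_uniq S_size) [_ /mapP[j _ ->]]; apply.
apply: sub_finite_set (finite_set1 (atom j)) => x [jx only_j].
apply: shape1_atom; apply/setP => k; rewrite in_set1.
have [->|kj] := eqVneq k j; first by rewrite -le_atom.
apply/negbTE/negP; rewrite -le_atom => kx; apply: (only_j (atom k)) => //.
- exact: map_f (mem_enum _ k).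
- by rewrite (inj_eq atom_inj).
Qed.

Local Open Scope ring_scope.

Lemma pairwise_sums_eq0 (R : numDomainType) (a b c : R) :
  a + b = 0 -> a + c = 0 -> b + c = 0 -> a = 0.
Proof.
move=> ab ac bc; have /eqP : a *+ 2 = 0.
  by rewrite -[a *+ 2](addrK (b + c)) {2}bc subr0 mulr2n addrACA ab ac addr0.
by rewrite mulrn_eq0 => /eqP.
Qed.

Lemma fsbig_supported_seq (R : nmodType) (T : choiceType) (A : set T) (s : seq T)
    (F : T -> R) :
  uniq s -> [set` s] `<=` A -> (forall x, A x -> x \notin s -> F x = 0) ->
  \sum_(x \in A) F x = \sum_(x <- s) F x.
Proof.
move=> s_uniq sA F0; rewrite [RHS]fsbig_seq //; symmetry.
by apply: fsbig_widen => // x [Ax /negP]; exact: F0.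
Qed.

Section FreshLabel.
Variables (f g : Q -> CC) (N : nat).
Hypothesis g_zeta : forall z, g z = \sum_(x \in [set x | (x <= z)%O]) f x.
Hypothesis f_fresh : forall x, N \in word x -> f x = 0.
Hypothesis g_fresh : forall x, N \in word x -> g x = 0.

Lemma g_nonatom (x : Q) : #|shape x| != 1%N -> g x = 0.
Proof.
move=> x1; have adm : admissible (shape x, rcons (word x) N).
  by rewrite /admissible /= (negbTE x1) -size_eq0 size_rcons implybT.
pose x' : Q := exist admissible _ adm.
have xx' : (x <= x')%O by rewrite leQE subxx prefix_rcons.
rewrite -(g_fresh (x := x')) ?mem_rcons ?mem_head // !g_zeta.
apply: fsbig_widen => [z /= zx | z [/=]]; first exact: le_trans zx xx'.
rewrite !leQE /= => /andP[zx]; rewrite prefix_rconsE zx /= => /orP[/eqP zN|->] // _.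
by apply: f_fresh; rewrite zN mem_rcons mem_head.
Qed.

Lemma f_bot : f bot = 0.
Proof.
rewrite -(g_nonatom (x := bot)) ?cards0 // g_zeta.
rewrite (fsbig_supported_seq (s := [:: bot])) ?big_seq1 // => [z|z /= zb].
  by rewrite /= inE => /eqP->.
by rewrite inE => /negP[]; apply/eqP/le_anti; rewrite zb le_botx.
Qed.

Lemma f_atom_pair (j k : 'I_3) : j != k -> f (atom j) + f (atom k) = 0.
Proof.
move=> jk; have adm : admissible ([set j; k]%SET, [:: N]).
  by rewrite /admissible /= cards2 jk.
pose w : Q := exist admissible _ adm.
rewrite -(g_fresh (x := w)) ?mem_head // g_zeta.
rewrite (fsbig_supported_seq (s := [:: bot; atom j; atom k])).
- by rewrite !big_cons big_nil f_bot add0r addr0.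
- by rewrite /= !inE negb_or !bot_neq_atom (inj_eq atom_inj) jk.
- move=> z /=; rewrite !inE => /or3P[] /eqP->;
    by rewrite ?le_botx // le_atom !inE eqxx ?orbT.
move=> z /= zw; have /andP[_] := zw; rewrite prefixs1 => /orP[/eqP/word_nil z0|/eqP zN].
  case: z0 zw => [->|[b ->]]; rewrite ?inE ?eqxx // le_atom !inE.
  by case/orP=> /eqP->; rewrite eqxx ?orbT.
by move=> _; apply: f_fresh; rewrite zN mem_head.
Qed.

Lemma f_atom (j : 'I_3) : f (atom j) = 0.
Proof.
have /cards2P[k [l [kl ekl]]] : #|[set~ j]%SET| == 2%N by rewrite cardsC1 card_ord.
have [kj lj] : k != j /\ l != j by rewrite -!in_setC1 ekl !inE !eqxx orbT.
apply: (pairwise_sums_eq0 (b := f (atom k)) (c := f (atom l)));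
  by apply: f_atom_pair; rewrite // eq_sym.
Qed.

Lemma g_atom (j : 'I_3) : g (atom j) = 0.
Proof.
rewrite g_zeta; apply: fsbig1 => z /= zj.
have /andP[_] := zj; rewrite prefixs0 => /eqP/word_nil[->|[k zk]]; first exact: f_bot.
by move: zj; rewrite zk le_atom inE => /eqP->; exact: f_atom.
Qed.

Lemma g_eq0 (x : Q) : g x = 0.
Proof.
have [/cards1P[j /shape1_atom->]|] := boolP (#|shape x| == 1%N).
  exact: g_atom.
exact: g_nonatom.
Qed.

End FreshLabel.

Lemma exists_fresh_label (X : set Q) :
  finite_set X -> exists N, forall x, X x -> N \notin word x.
Proof.
move=> finX; pose L := \bigcup_(x in X) [set` word x].
have finL : finite_set L by apply: bigcup_finite => // x _; exact: finite_seq.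
have /existsNP[N NL] : ~ forall N, L N.
  by move=> allL; apply: infinite_nat; apply: sub_finite_set finL => n.
by exists N => x Xx; apply/negP => Nx; apply: NL; exists x.
Qed.

Lemma Q_mobius_uncertainty : mobius_uncertainty Q.
Proof.
move=> f g _ [x gx] g_zeta; apply/not_andP => -[finf fing].
have [N fresh] : exists N, forall y, ([set y | f y != 0] `|` [set y | g y != 0]) y ->
    N \notin word y.
  by apply: exists_fresh_label; rewrite finite_setU.
have f_fresh y : N \in word y -> f y = 0.
  by move=> Ny; apply: contraTeq Ny => fy; apply: fresh; left.
have g_fresh y : N \in word y -> g y = 0.
  by move=> Ny; apply: contraTeq Ny => gy; apply: fresh; right.
by move/eqP: gx; apply; exact: g_eq0 g_zeta f_fresh g_fresh x.
Qed.

Theorem theorem1p7 :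
  exists (d : Order.disp_t) (Q : porderType d),
    [/\ locally_finite Q, has_minimum Q, mobius_uncertainty Q
      & ~ property_H Q 3].
Proof.
exists Q_display, Q.
by split; [exact: Q_locally_finite | exact: Q_has_minimum
          | exact: Q_mobius_uncertainty | exact: Q_not_H3].
Qed.
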